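(* Let $N\ge 2$ and $A,B,C>0$ with $B>(N-1)C$, and define $D_i^N(p_1,\ldots,p_N)=A-Bp_i+C\sum_{j\ne i}p_j$ for $i=1,\ldots,N$. Define lower-level demand functions recursively by $D_i^n(p_1,\ldots,p_n)=D_i^{n+1}(p_1,\ldots,p_n,\hat p_{n+1})$ for $i\le n$, where $\hat p_{n+1}(p_1,\ldots,p_n)$ solves $D^{n+1}_{n+1}(p_1,\ldots,p_n,\hat p_{n+1})=0$. Then for each $n\in\{1,\ldots,N-1\}$, $$D_i^n(p_1,\ldots,p_n)=a_n-b_np_i+c_n\sum_{j\le n,\,j\ne i}p_j,\qquad i=1,\ldots,n,$$ where $a_N=A$, $b_N=B$, $c_N=C$ and, for $2\le n\le N$, $$a_{n-1}=a_n\Big(1+\frac{c_n}{b_n}\Big),\quad b_{n-1}=b_n\Big(1-\frac{c_n^2}{b_n^2}\Big),\quad c_{n-1}=c_n\Big(1+\frac{c_n}{b_n}\Big).$$ *)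

(* real field R, prices as sequences nat -> R (0-based firms). *)
From HB Require Import structures.
From mathcomp Require Import all_boot all_order all_algebra.
Set Implicit Arguments. Unset Strict Implicit. Unset Printing Implicit Defensive.
Import Order.TTheory GRing.Theory Num.Theory.
Local Open Scope ring_scope.

Definition coef_step (R : realFieldType) (t : R * R * R) : R * R * R :=
  let '(a, b, c) := t in
  (a * (1 + c / b), b * (1 - c ^+ 2 / b ^+ 2), c * (1 + c / b)).

Definition coefs (R : realFieldType) (N : nat) (A B C : R) (n : nat) : R * R * R :=
  iter (N - n) (@coef_step R) (A, B, C).

Definition coef_a (R : realFieldType) N (A B C : R) n := (coefs N A B C n).1.1.
Definition coef_b (R : realFieldType) N (A B C : R) n := (coefs N A B C n).1.2.
Definition coef_c (R : realFieldType) N (A B C : R) n := (coefs N A B C n).2.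

(* price vector p with the entry of (0-based) firm n replaced by q *)
Definition upd (R : realFieldType) (p : nat -> R) (n : nat) (q : R) : nat -> R :=
  fun j => if j == n then q else p j.

(** Solving the last firm's first-order condition [D^{n+1}_{n+1} = 0] for its
    price gives [p_{n+1} = (a + c * sum_j p_j) / b], and substituting it into a
    linear demand system of level [n+1] leaves a linear system of level [n]
    whose coefficients are [coef_step (a, b, c)].  Downward induction from [N]
    therefore proves the formula, provided each [b_n] stays nonzero; this
    follows from the invariant [(n - 1) c_n < b_n] with [c_n > 0], which
    [coef_step] preserves since
    [b' - (n - 2) c' = (b - (n - 1) c) (b + c) / b]. *)

From HB Require Import structures.
From mathcomp Require Import all_boot all_order all_algebra.
From mathcomp Require Import ring.
Import Order.TTheory GRing.Theory Num.Theory.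
Local Open Scope ring_scope.

Section LinearDemand.
Context {R : realFieldType}.
Implicit Types (t : R * R * R) (p : nat -> R).

Definition lin_demand t (n : nat) p (i : nat) : R :=
  t.1.1 - t.1.2 * p i + t.2 * \sum_(j < n | (j : nat) != i) p j.

(* [m.+1] firms, each own-price effect [b] exceeding the [m] cross effects [c]. *)
Definition diag_dominant (m : nat) t : Prop := 0 < t.2 /\ m%:R * t.2 < t.1.2.

Lemma diag_dominant_gt0 {m t} : diag_dominant m t -> 0 < t.1.2.
Proof.
case=> c_gt0; apply: le_lt_trans.
by rewrite mulr_ge0 // ltW.
Qed.

Lemma diag_dominant_coef_step m t :
  diag_dominant m.+1 t -> diag_dominant m (coef_step t).
Proof.
case: t => [[a b] c] /= dd; have b_gt0 := diag_dominant_gt0 dd.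
case: dd => /= c_gt0 bc; split => /=.
  by rewrite mulr_gt0 // addr_gt0 // divr_gt0.
have gap : b * (1 - c ^+ 2 / b ^+ 2) - m%:R * (c * (1 + c / b))
    = (b - m.+1%:R * c) * (b + c) / b.
  by rewrite -natr1; field; rewrite gt_eqF.
by rewrite -subr_gt0 gap divr_gt0 // mulr_gt0 ?subr_gt0 ?addr_gt0.
Qed.

Lemma sum_upd_neq p n q i : (i < n)%N ->
  \sum_(j < n.+1 | (j : nat) != i) upd p n q j
    = \sum_(j < n | (j : nat) != i) p j + q.
Proof.
move=> lt_in; rewrite big_mkcond big_ord_recr /= [in RHS]big_mkcond.
rewrite neq_ltn lt_in orbT /upd eqxx; congr (_ + _).
by apply: eq_bigr => j _; rewrite (ltn_eqF (ltn_ord j)).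
Qed.

Lemma sum_upd_neq_last p n q :
  \sum_(j < n.+1 | (j : nat) != n) upd p n q j = \sum_(j < n) p j.
Proof.
rewrite big_mkcond big_ord_recr /= eqxx addr0.
by apply: eq_bigr => j _; rewrite /upd (ltn_eqF (ltn_ord j)).
Qed.

Definition best_response t (n : nat) p : R :=
  (t.1.1 + t.2 * \sum_(j < n) p j) / t.1.2.

Lemma lin_demand_best_response t n p : t.1.2 != 0 ->
  lin_demand t n.+1 (upd p n (best_response t n p)) n = 0.
Proof.
move=> b_neq0; rewrite /lin_demand sum_upd_neq_last /upd eqxx /best_response.
by field.
Qed.

Lemma lin_demand_upd_best_response t n p i : t.1.2 != 0 -> (i < n)%N ->
  lin_demand t n.+1 (upd p n (best_response t n p)) i
    = lin_demand (coef_step t) n p i.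
Proof.
case: t => [[a b] c] /= b_neq0 lt_in.
rewrite /lin_demand sum_upd_neq // /upd ltn_eqF // /best_response /=.
rewrite [\sum_(j < n) p j](bigD1 (Ordinal lt_in)) //=.
by field.
Qed.

End LinearDemand.

Lemma coefsS (R : realFieldType) N (A B C : R) n : (n < N)%N ->
  coefs N A B C n = coef_step (coefs N A B C n.+1).
Proof. by move=> lt_nN; rewrite /coefs -subnSK. Qed.

Section DemandRecursion.
Context {R : realFieldType} {N : nat} {A B C : R}.
Context {D : nat -> (nat -> R) -> nat -> R}.
Hypothesis C_gt0 : 0 < C.
Hypothesis BC : (N - 1)%:R * C < B.
Hypothesis D_top : forall p i, (i < N)%N -> D N p i = lin_demand (A, B, C) N p i.
Hypothesis D_rec : forall n p q, (1 <= n < N)%N -> D n.+1 (upd p n q) n = 0 ->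
  forall i, (i < n)%N -> D n p i = D n.+1 (upd p n q) i.

Lemma demand_coefs k n : (n + k)%N = N -> (1 <= n)%N ->
  diag_dominant (n - 1) (coefs N A B C n) /\
  forall p i, (i < n)%N -> D n p i = lin_demand (coefs N A B C n) n p i.
Proof.
elim: k n => [|k IH] n.
  by rewrite addn0 => -> _; rewrite /coefs subnn; split; [split | exact: D_top].
move=> nkN n_ge1; have lt_nN : (n < N)%N by rewrite -nkN addnS ltnS leq_addr.
have [] := IH n.+1; rewrite ?addSnnS // subn1 /= => dd D_succ.
have b_neq0 := lt0r_neq0 (diag_dominant_gt0 dd).
rewrite coefsS //; split.
  by rewrite -(prednK n_ge1) subn1 in dd *; exact: diag_dominant_coef_step.
move=> p i lt_in; set q := best_response (coefs N A B C n.+1) n p.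
have root_q : D n.+1 (upd p n q) n = 0.
  by rewrite D_succ // lin_demand_best_response.
rewrite (D_rec _ _ _ _ root_q) ?n_ge1 ?lt_nN // D_succ ?(ltn_trans lt_in) //.
exact: lin_demand_upd_best_response.
Qed.

End DemandRecursion.

Theorem proposition2p4 (R : realFieldType) (N : nat) (A B C : R)
    (D : nat -> (nat -> R) -> nat -> R) :
  (2 <= N)%N -> 0 < A -> 0 < B -> 0 < C -> (N - 1)%:R * C < B ->
  (forall (p : nat -> R) (i : nat), (i < N)%N ->
     D N p i = A - B * p i + C * \sum_(j < N | (j : nat) != i) p j) ->
  (forall (n : nat) (p : nat -> R) (q : R), (1 <= n < N)%N ->
     D n.+1 (upd p n q) n = 0 ->
     forall i : nat, (i < n)%N -> D n p i = D n.+1 (upd p n q) i) ->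
  forall n : nat, (1 <= n <= N - 1)%N ->
  forall (p : nat -> R) (i : nat), (i < n)%N ->
    D n p i = coef_a N A B C n - coef_b N A B C n * p i
              + coef_c N A B C n * \sum_(j < n | (j : nat) != i) p j.
Proof.
move=> _ _ _ C_gt0 BC D_top D_rec n /andP[n_ge1 n_le] p i lt_in.
have nkN : (n + (N - n))%N = N by rewrite subnKC // (leq_trans n_le) ?leq_subr.
have [_ D_n] := demand_coefs C_gt0 BC D_top D_rec _ _ nkN n_ge1.
exact: D_n.
Qed.
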